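(* Let $\{p_{(R,\alpha)}(\mathbf{x})\}_{(R,\alpha)}$ be a replacement rule satisfying the Fixation Axiom and Assumptions 3 and 4, and let $g,h\in G$ with $g\sim h$. Then $d_g(\mathbf{x})=d_h(\mathbf{x})$ and $e_{g\ell}(\mathbf{x})=e_{h\ell}(\mathbf{x})$ for every state $\mathbf{x}\in\{0,1\}^G$ and every $\ell\in G$. If, furthermore, Assumption 1 holds, then $v_g=v_h$ and $w_g(\mathbf{x})=w_h(\mathbf{x})$ for every state $\mathbf{x}$.
   Context: $G$ is a finite nonempty set of genetic sites, $n=|G|$, partitioned into sets $G_i$ ($i\in I$, the individuals); $g\sim h$ means $g,h\in G_i$ for some $i$. A state is $\mathbf{x}\in\{0,1\}^G$; $\mathbf{a}$ is the all-zero and $\mathbf{A}$ the all-one state. A replacement event is $(R,\alpha)$ with $R\subseteq G$, $\alpha:R\to G$; a replacement rule gives for each state a probability distribution $\{p_{(R,\alpha)}(\mathbf{x})\}$ over events. Fixation Axiom: there exist $g\in G$, $m\ge1$, events $(R_k,\alpha_k)_{k=1}^m$ with $p_{(R_k,\alpha_k)}(\mathbf{x})>0$ for all $k,\mathbf{x}$, $g\in R_k$ for some $k$, and $\tilde\alpha_1\circ\cdots\circ\tilde\alpha_m(h)=g$ for all $h$, where $\tilde\alpha_k$ equals $\alpha_k$ on $R_k$ and the identity elsewhere. $e_{gh}(\mathbf{x})=\sum_{(R,\alpha):h\in R,\alpha(h)=g}p_{(R,\alpha)}(\mathbf{x})$, $d_g(\mathbf{x})=\sum_he_{hg}(\mathbf{x})=\sum_{(R,\alpha):g\in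 R}p_{(R,\alpha)}(\mathbf{x})$. Assumption 1: $p_{(R,\alpha)}(\mathbf{A})=p_{(R,\alpha)}(\mathbf{a})$ for all events; $e^\circ_{gh},d^\circ_g$ denote values in these states. Reproductive values: the unique $(v_g)$ with $d^\circ_gv_g=\sum_\ell e^\circ_{g\ell}v_\ell$ for all $g$ and $\sum_gv_g=n$. Fitness: $w_g(\mathbf{x})=v_g-v_gd_g(\mathbf{x})+\sum_\ell e_{g\ell}(\mathbf{x})v_\ell$. Assumption 3 (coherence of individuals): if $g\sim h$, then for each state $\mathbf{x}$ and each event $(R,\alpha)$ with $p_{(R,\alpha)}(\mathbf{x})>0$, either $g,h\in R$ or $g,h\notin R$. Assumption 4 (fair meiosis): if $(R,\alpha_1)$, $(R,\alpha_2)$ are events with the same $R$ and $\alpha_1(g)\sim\alpha_2(g)$ for all $g\in R$, then $p_{(R,\alpha_1)}(\mathbf{x})=p_{(R,\alpha_2)}(\mathbf{x})$ for every state $\mathbf{x}$. *)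

From mathcomp Require Import all_boot all_order all_algebra.
Set Implicit Arguments. Unset Strict Implicit. Unset Printing Implicit Defensive.
Import Order.TTheory GRing.Theory Num.Theory.
Local Open Scope ring_scope.

(* Individuals: a labelling ind : G -> I; g ~ h iff ind g = ind h.
   Replacement events (R, alpha) with R ⊆ G, alpha : R -> G are encoded bijectively
   as E : {ffun G -> option G}:  g ∈ R <-> E g <> None,  alpha g = y <-> E g = Some y. *)
Definition state (G : finType) := {ffun G -> bool}.
Definition event (G : finType) := {ffun G -> option G}.

Definition in_R (G : finType) (E : event G) (g : G) : bool := E g != None.

Definition alpha_tilde (G : finType) (E : event G) (g : G) : G :=
  if E g is Some y then y else g.

Definition compose_events (G : finType) (es : seq (event G)) : G -> G :=
  foldr (fun E f => alpha_tilde E \o f) id es.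

Definition all0 (G : finType) : state G := [ffun _ => false].
Definition all1 (G : finType) : state G := [ffun _ => true].

Section Rule.
Variables (R : realFieldType) (G : finType).
Variable p : state G -> event G -> R.

Definition replacement_rule : Prop :=
  forall x : state G, (forall E, 0 <= p x E) /\ \sum_(E : event G) p x E = 1.

Definition fixation_axiom : Prop :=
  exists (g : G) (es : seq (event G)),
    (0 < size es)%N /\
    (forall E, E \in es -> forall x, 0 < p x E) /\
    (exists2 E, E \in es & in_R E g) /\
    (forall h, compose_events es h = g).

Definition e_rate (x : state G) (g h : G) : R :=
  \sum_(E : event G | E h == Some g) p x E.

Definition d_rate (x : state G) (g : G) : R :=
  \sum_(E : event G | in_R E g) p x E.

Variables (I : Type) (ind : G -> I).

Definition coherence : Prop :=
  forall g h, ind g = ind h -> forall x E, 0 < p x E -> in_R E g = in_R E h.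

Definition fair_related (E1 E2 : event G) : Prop :=
  forall g, match E1 g, E2 g with
            | Some a, Some b => ind a = ind b
            | None, None => True
            | _, _ => False
            end.

Definition fair_meiosis : Prop :=
  forall E1 E2, fair_related E1 E2 -> forall x, p x E1 = p x E2.

Definition assumption1 : Prop := forall E, p (all1 G) E = p (all0 G) E.

(* v is the vector of reproductive values (defined w.r.t. the monomorphic state a) *)
Definition reproductive_values (v : G -> R) : Prop :=
  (forall g, d_rate (all0 G) g * v g = \sum_(l : G) e_rate (all0 G) g l * v l) /\
  \sum_(g : G) v g = #|G|%:R.

Definition fitness (v : G -> R) (x : state G) (g : G) : R :=
  v g - v g * d_rate x g + \sum_(l : G) e_rate x g l * v l.

End Rule.

From mathcomp Require Import all_boot all_order fingroup perm all_algebra.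
Set Implicit Arguments. Unset Strict Implicit. Unset Printing Implicit Defensive.
Import Order.TTheory GRing.Theory Num.Theory.
Local Open Scope ring_scope.

(* Relabelling every parent site of an event by the transposition of g and h
   gives an event with the same probability (fair meiosis), and it is a
   bijection on events exchanging the conditions "alpha l = g" and
   "alpha l = h"; hence e_{gl} = e_{hl}.  Coherence makes the indicator of
   g \in R and of h \in R agree on every event of positive probability, hence
   d_g = d_h.  By the Fixation Axiom every site lies in the replaced set of an
   always-possible event (a site outside all of them would be a fixed point of
   the composed map onto g), so d_y > 0 and the defining equations of
   reproductive values at g and h can be divided by d_g = d_h. *)

Definition relabel_event (G : finType) (s : G -> G) (E : event G) : event G :=
  [ffun z => omap s (E z)].

Lemma relabel_event_inj (G : finType) (s : G -> G) :
  injective s -> injective (relabel_event s).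
Proof.
move=> s_inj E1 E2 eqE; apply/ffunP => z; move/ffunP/(_ z): eqE; rewrite !ffunE.
by case: (E1 z) (E2 z) => [a|] [b|] //= [/s_inj->].
Qed.

Lemma compose_events_id (G : finType) (es : seq (event G)) (g : G) :
  ~~ has (fun E => in_R E g) es -> compose_events es g = g.
Proof.
elim: es => [|E es IH] //=; rewrite negb_or /in_R negbK => /andP[/eqP Eg /IH ->].
by rewrite /alpha_tilde Eg.
Qed.

Section Rates.
Variables (R : realFieldType) (G : finType) (p : state G -> event G -> R).
Hypothesis p_ge0 : forall x E, 0 <= p x E.

Lemma d_rate_gt0 : fixation_axiom p -> forall x y, 0 < d_rate p x y.
Proof.
case=> g0 [es [_ [p_gt0 [[E0 E0es E0g0] comp_g0]]]] x y.
have [E Ees Ey] : exists2 E, E \in es & in_R E y.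
  have [->|y_neq_g0] := eqVneq y g0; first by exists E0.
  apply/(@hasP _ (fun E => in_R E y)); apply: contraTT y_neq_g0 => no_parent.
  by rewrite negbK -{1}(comp_g0 y) compose_events_id.
rewrite /d_rate (bigD1 E) //= ltr_pwDl ?p_gt0 //.
by apply: sumr_ge0 => ? _; apply: p_ge0.
Qed.

Variables (I : Type) (ind : G -> I).

Lemma d_rate_coherent g h x :
  coherence p ind -> ind g = ind h -> d_rate p x g = d_rate p x h.
Proof.
move=> coh gh; rewrite /d_rate (big_mkcond (fun E => in_R E g)).
rewrite [RHS](big_mkcond (fun E => in_R E h)); apply: eq_bigr => E _.
have [->|p_gt0] := eqVneq (p x E) 0; first by rewrite !if_same.
by rewrite (coh g h gh x E) // lt0r p_gt0 p_ge0.
Qed.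

Section FairMeiosis.
Hypothesis fair : fair_meiosis p ind.

Lemma p_relabel_event (s : G -> G) x E :
  (forall a, ind (s a) = ind a) -> p x (relabel_event s E) = p x E.
Proof.
move=> s_ind; apply: fair => z; rewrite ffunE.
by case: (E z) => //= a; rewrite s_ind.
Qed.

Lemma e_rate_relabel (s : G -> G) x g l :
  injective s -> (forall a, ind (s a) = ind a) ->
  e_rate p x (s g) l = e_rate p x g l.
Proof.
move=> s_inj s_ind; rewrite /e_rate (reindex_inj (relabel_event_inj s_inj)).
apply: eq_big => [E|E _]; last exact: p_relabel_event.
by rewrite ffunE; case: (E l) => //= a; exact: (inj_eq s_inj).
Qed.

Lemma e_rate_fair g h x l : ind g = ind h -> e_rate p x g l = e_rate p x h l.
Proof.
move=> gh; rewrite -[in RHS](tpermL g h); symmetry.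
by apply: e_rate_relabel => [|a]; [exact: perm_inj | case: tpermP => [->|->|]].
Qed.

End FairMeiosis.

Lemma reproductive_values_eq v g h :
  reproductive_values p v -> 0 < d_rate p (all0 G) g ->
  d_rate p (all0 G) g = d_rate p (all0 G) h ->
  (forall l, e_rate p (all0 G) g l = e_rate p (all0 G) h l) -> v g = v h.
Proof.
move=> [rv _] d_gt0 eq_d eq_e; apply: (mulfI (lt0r_neq0 d_gt0)).
by rewrite rv eq_d rv; apply: eq_bigr => l _; rewrite eq_e.
Qed.

Lemma fitness_eq v x g h :
  v g = v h -> d_rate p x g = d_rate p x h ->
  (forall l, e_rate p x g l = e_rate p x h l) -> fitness p v x g = fitness p v x h.
Proof.
move=> eq_v eq_d eq_e; rewrite /fitness eq_v eq_d.
by congr (_ + _); apply: eq_bigr => l _; rewrite eq_e.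
Qed.

End Rates.

Theorem lemma3 (R : realFieldType) (G : finType) (I : Type) (ind : G -> I)
  (p : state G -> event G -> R) :
  replacement_rule p -> fixation_axiom p -> coherence p ind -> fair_meiosis p ind ->
  forall g h : G, ind g = ind h ->
  (forall x : state G,
     d_rate p x g = d_rate p x h /\ (forall l : G, e_rate p x g l = e_rate p x h l)) /\
  (assumption1 p ->
   forall v : G -> R, reproductive_values p v ->
   v g = v h /\ (forall x : state G, fitness p v x g = fitness p v x h)).
Proof.
move=> rule fixa coh fair g h gh.
have p_ge0 x E : 0 <= p x E by case: (rule x) => ->.
have eq_d x := d_rate_coherent p_ge0 x coh gh.
have eq_e x l := e_rate_fair fair x l gh.
split=> [x|_ v rv]; first by split; [exact: eq_d | exact: eq_e].
have eq_v : v g = v h.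
  by apply: reproductive_values_eq rv (d_rate_gt0 p_ge0 fixa _ _) (eq_d _) (eq_e _).
by split=> // x; apply: fitness_eq.
Qed.
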